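(* Let $n\geqslant 2$ and let $\alpha\colon\mathbb{N}^n\to\mathbb{N}^n$ be an isometry of $\mathbb{N}^n$ onto itself such that $(\mathbf{2}_i)\alpha=\mathbf{2}_i$ for all $i=1,\ldots,n$. Then $\alpha$ is the identity map of $\mathbb{N}^n$.
   Context: $\mathbb{N}=\{1,2,3,\ldots\}$ and $\mathbb{N}^n$ carries the Euclidean metric. Maps are written on the right. For $i\in\{1,\ldots,n\}$, $\mathbf{2}_i$ is the point of $\mathbb{N}^n$ whose $i$-th coordinate is $2$ and all other coordinates equal $1$. *)

From mathcomp Require Import all_boot.
Set Implicit Arguments. Unset Strict Implicit. Unset Printing Implicit Defensive.

(* Points of Z^n-like space: functions 'I_n -> nat (coordinate i is x i);
   the subset N^n (coordinates in {1,2,...}) is carved out by [inNn]. *)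
Definition pt (n : nat) := {ffun 'I_n -> nat}.

Definition inNn (n : nat) (x : pt n) : Prop := forall i : 'I_n, 0 < x i.

Definition absdiff (a b : nat) : nat := (a - b) + (b - a).

Definition sqdist (n : nat) (x y : pt n) : nat :=
  \sum_(i < n) (absdiff (x i) (y i)) ^ 2.

Definition two (n : nat) (i : 'I_n) : pt n :=
  [ffun j => if j == i then 2 else 1].

Definition isometry_onto (n : nat) (alpha : pt n -> pt n) : Prop :=
  (forall x, inNn x -> inNn (alpha x)) /\
  (forall y, inNn y -> exists x, inNn x /\ alpha x = y) /\
  (forall x y, inNn x -> inNn y -> sqdist (alpha x) (alpha y) = sqdist x y).

From mathcomp Require Import all_boot.
From mathcomp Require Import zify.
Set Implicit Arguments. Unset Strict Implicit.

(* A point x of N^n is determined by its distances to 1 = (1,...,1) and to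
   the points 2_i, since d(x,2_i)^2 + 2 x_i = d(x,1)^2 + 3.  Hence it suffices
   to show that alpha fixes 1.  The points at distance 1 from every 2_i are 1
   and, only when n = 2, the point (2,2); so the preimage of 1 is 1 unless
   n = 2 and alpha (2,2) = 1.  In that case the image w of (3,1) would satisfy
   d(w,1)^2 = 2 and d(w,2_2)^2 = 5, forcing w_2 = 0. *)

Definition ones (n : nat) : pt n := [ffun=> 1].
Definition twos (n : nat) : pt n := [ffun=> 2].

Lemma inNn_ones n : inNn (ones n).
Proof. by move=> i; rewrite ffunE. Qed.

Lemma inNn_twos n : inNn (twos n).
Proof. by move=> i; rewrite ffunE. Qed.

Lemma inNn_two n (i : 'I_n) : inNn (two i).
Proof. by move=> j; rewrite ffunE; case: (j == i). Qed.

Lemma absdiff2_sqr a : 0 < a -> absdiff a 2 ^ 2 + 2 * a = absdiff a 1 ^ 2 + 3.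
Proof.
rewrite /absdiff; case: a => [//|[//|a]] _.
have -> : 2 - a.+2 = 0 by lia.
have -> : 1 - a.+2 = 0 by lia.
rewrite !addn0 !subSS subn0; nia.
Qed.

Lemma sqdist_two n (x : pt n) (i : 'I_n) : inNn x ->
  sqdist x (two i) + 2 * x i = sqdist x (ones n) + 3.
Proof.
move=> x_in; rewrite /sqdist (bigD1 i) //= [in RHS](bigD1 i) //= !ffunE eqxx.
have -> : \sum_(j < n | j != i) absdiff (x j) (two i j) ^ 2 =
          \sum_(j < n | j != i) absdiff (x j) (ones n j) ^ 2.
  by apply: eq_bigr => j /negbTE ji; rewrite !ffunE ji.
by rewrite addnAC (absdiff2_sqr (x_in i)) addnAC.
Qed.

Lemma sqdist_ones_two n (i : 'I_n) : sqdist (ones n) (two i) = 1.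
Proof.
rewrite /sqdist (bigD1 i) //= big1 => [|j ji]; first by rewrite !ffunE eqxx.
by rewrite !ffunE (negbTE ji).
Qed.

Lemma eq_pt_sqdist n (x y : pt n) : inNn x -> inNn y ->
  sqdist x (ones n) = sqdist y (ones n) ->
  (forall i, sqdist x (two i) = sqdist y (two i)) -> x = y.
Proof.
move=> x_in y_in eq_ones eq_two; apply/ffunP => i.
have := sqdist_two i x_in; rewrite eq_ones eq_two -(sqdist_two i y_in).
by move/addnI/eqP; rewrite eqn_pmul2l // => /eqP.
Qed.

Lemma sqdist_two_eq1 n (y : pt n) : 2 <= n -> inNn y ->
  (forall i, sqdist y (two i) = 1) -> y = ones n \/ (n = 2 /\ y = twos n).
Proof.
move=> n_ge2 y_in y_two.
have y_coord i : 2 * y i = sqdist y (ones n) + 2.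
  by have := sqdist_two i y_in; rewrite y_two; lia.
pose i0 : 'I_n := Ordinal (ltnW n_ge2); set c := y i0.
have y_const i : y i = c by have := y_coord i; have := y_coord i0; lia.
have c_gt0 : 0 < c := y_in i0.
have sqdist_ones : sqdist y (ones n) = n * (c - 1) ^ 2.
  rewrite /sqdist (eq_bigr (fun _ => (c - 1) ^ 2)) ?sum_nat_const ?card_ord //.
  by move=> i _; rewrite y_const ffunE /absdiff (_ : 1 - c = 0) ?addn0 //; lia.
have := y_coord i0; rewrite sqdist_ones -/c => c_eq.
case: (ltngtP c 2) => [c_lt2 | c_gt2 | c2].
- by left; apply/ffunP => i; rewrite y_const ffunE; lia.
- have [d c_eq_d] : exists d, c = d.+3 by exists (c - 3); lia.
  rewrite c_eq_d subSS subn0 in c_eq.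
  have : 2 * d.+2 ^ 2 <= n * d.+2 ^ 2 by rewrite leq_mul2r n_ge2 orbT.
  nia.
- right; split; first by rewrite c2 in c_eq; lia.
  by apply/ffunP => i; rewrite y_const ffunE.
Qed.

Section IsometryFixingTwos.

Variables (n : nat) (alpha : pt n -> pt n).
Hypothesis n_ge2 : 2 <= n.
Hypothesis alpha_in : forall x, inNn x -> inNn (alpha x).
Hypothesis alpha_onto : forall y, inNn y -> exists x, inNn x /\ alpha x = y.
Hypothesis alpha_iso : forall x y, inNn x -> inNn y ->
  sqdist (alpha x) (alpha y) = sqdist x y.
Hypothesis alpha_two : forall i, alpha (two i) = two i.

Lemma sqdist_alpha_two x i : inNn x -> sqdist (alpha x) (two i) = sqdist x (two i).
Proof. by move=> x_in; rewrite -{1}(alpha_two i) alpha_iso //; apply: inNn_two. Qed.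

Lemma alpha_twos_ones : alpha (twos n) = ones n -> 4 <= n.
Proof.
move=> alpha_twos.
pose i : 'I_n := Ordinal n_ge2; pose j : 'I_n := Ordinal (ltnW n_ge2).
have ij : i != j by [].
pose p : pt n := [ffun k => if k == j then 3 else 1].
have p_in : inNn p by move=> k; rewrite ffunE; case: (k == j).
have p_ones : sqdist p (ones n) = 4.
  rewrite /sqdist (bigD1 j) //= big1 => [|k kj]; first by rewrite !ffunE eqxx.
  by rewrite !ffunE (negbTE kj).
have p_twos : sqdist p (twos n) = n.
  rewrite /sqdist (eq_bigr (fun _ => 1)) ?sum_nat_const ?card_ord ?muln1 //.
  by move=> k _; rewrite !ffunE; case: (k == j).
have p_two := sqdist_two i p_in; rewrite p_ones ffunE (negbTE ij) in p_two.
have w_ones : sqdist (alpha p) (ones n) = n.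
  by rewrite -alpha_twos alpha_iso //; apply: inNn_twos.
have := sqdist_two i (alpha_in p_in).
rewrite w_ones sqdist_alpha_two //; have := alpha_in p_in i; lia.
Qed.

Lemma alpha_ones : alpha (ones n) = ones n.
Proof.
have [z [z_in alpha_z]] := alpha_onto (@inNn_ones n).
have z_two i : sqdist z (two i) = 1.
  by rewrite -sqdist_alpha_two // alpha_z sqdist_ones_two.
have [z1 | [n2 z_twos]] := sqdist_two_eq1 n_ge2 z_in z_two.
  by rewrite -{1}z1.
have := alpha_twos_ones; rewrite -z_twos alpha_z => /(_ erefl).
by rewrite [in 3 < _]n2.
Qed.

End IsometryFixingTwos.

Theorem corollary3p1 (n : nat) (alpha : pt n -> pt n) :
  2 <= n ->
  isometry_onto alpha ->
  (forall i : 'I_n, alpha (two i) = two i) ->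
  forall x : pt n, inNn x -> alpha x = x.
Proof.
move=> n_ge2 [alpha_in [alpha_onto alpha_iso]] alpha_two x x_in.
have alpha1 := alpha_ones n_ge2 alpha_in alpha_onto alpha_iso alpha_two.
apply: eq_pt_sqdist.
- exact: alpha_in.
- exact: x_in.
- by rewrite -{1}alpha1 alpha_iso //; apply: inNn_ones.
- by move=> i; rewrite (sqdist_alpha_two alpha_iso alpha_two).
Qed.
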